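(* Let $n\ge2$, $f:\mathbb{R}^n\to\mathbb{R}^n$ continuously differentiable, $b_0\in\mathbb{R}^n_{\ge0}$, $\mu,\theta>0$, $r:=\mu/\theta$, and let $x^*\in\mathbb{R}^n_{\ge0}$, $u_*>0$ satisfy $x^*_n=r$ and $f(x^* )-u_*re_n+b_0=0$. Let $J:=\partial f/\partial x(x^* )$ with blocks $J_{12}:=S^TJe_n$, $J_{21}:=e_n^TJS$. Assume $J$ is Hurwitz stable and that $J_{12}=0$ or $J_{21}=0$. Then for all $\eta,k_p>0$ the equilibrium $\big(x^*,\ \mu/(\eta u_* ),\ u_*/k_p\big)$ of $\dot x=f(x)-k_px_nz_2e_n+b_0$, $\dot z_1=\mu-\eta k_pz_1z_2$, $\dot z_2=\theta x_n-\eta k_pz_1z_2$ is locally exponentially stable.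
   Context: $S:=[e_1\ \cdots\ e_{n-1}]$, $e_i$ standard basis vectors; $x_n=e_n^Tx$. Hurwitz stable: all eigenvalues have negative real part. An equilibrium is called locally exponentially stable here if the Jacobian matrix of the vector field at the equilibrium is Hurwitz stable. *)

From HB Require Import structures.
From mathcomp Require Import all_boot all_order all_algebra.
From mathcomp Require Import all_classical all_reals all_analysis.
From mathcomp Require Import complex.
Set Implicit Arguments. Unset Strict Implicit. Unset Printing Implicit Defensive.
Import Order.TTheory GRing.Theory Num.Theory.
Import numFieldNormedType.Exports.
Local Open Scope ring_scope.

Section Defs.
Variable R : realType.

(* standard basis vector e_n of R^n (column vector); zero vector if n = 0 *)
Definition ecol (n : nat) : 'cV[R]_n := \col_(i < n) (i.+1 == n)%:R.

(* S := [e_1 ... e_{n-1}]  (an n x (n-1) matrix) *)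
Definition Smx (n : nat) : 'M[R]_(n, n.-1) :=
  \matrix_(i < n, j < n.-1) (i == j :> nat)%:R.

(* x_n := e_n^T x, for a state x stored as a row vector *)
Definition xlast (n : nat) (x : 'rV[R]_n) : R := (x *m ecol n) 0 0.

(* Jacobian matrix in the paper's convention: J i j = d f_i / d x_j (x).
   The library's 'J f x = lin1_mx ('d f x) acts on row vectors and is the
   transpose of this. *)
Definition jac (n m : nat) (f : 'rV[R]_n -> 'rV[R]_m) (x : 'rV[R]_n)
  : 'M[R]_(m, n) := ('J f x)^T.

Definition C1 (n m : nat) (f : 'rV[R]_n -> 'rV[R]_m) : Prop :=
  (forall x, differentiable f x) /\
  (forall j : 'I_n, continuous (fun x => 'D_(delta_mx 0 j) f x)).

Definition hurwitz (n : nat) (A : 'M[R]_n) : Prop :=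
  forall z : R[i], eigenvalue (map_mx (real_complex R) A) z -> Re z < 0.

Definition closed_loop (n : nat) (f : 'rV[R]_n -> 'rV[R]_n) (b0 : 'rV[R]_n)
  (mu theta eta kp : R) (w : 'rV[R]_(n + 2)) : 'rV[R]_(n + 2) :=
  let x := lsubmx w in
  let z1 := rsubmx w 0 0 in
  let z2 := rsubmx w 0 1 in
  row_mx (f x - (kp * xlast x * z2) *: (ecol n)^T + b0)
         (\row_(i < 2) nth 0 [:: mu - eta * kp * z1 * z2;
                                 theta * xlast x - eta * kp * z1 * z2] i).

End Defs.

From HB Require Import structures.
From mathcomp Require Import all_boot all_order all_algebra.
From mathcomp Require Import all_classical all_reals all_analysis.
From mathcomp Require Import complex ring lra zify.
Import Order.TTheory GRing.Theory Num.Theory.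
Import numFieldNormedType.Exports.
Local Open Scope ring_scope.
Set Implicit Arguments. Unset Strict Implicit. Unset Printing Implicit Defensive.

(* In the coordinates (x_1..x_(n-1); x_n, z1, z2) the Jacobian of the closed loop at the
   equilibrium is block triangular when J12 = 0 or J21 = 0, so its characteristic
   polynomial is det(z - J11) times the cubic (z + d)(z^2 + (a + c) z) + theta k (z + a),
   where a = eta kp z2, c = eta kp z1, k = kp x_n and d = kp z2 - J_nn. The same
   triangularity gives det(z - J) = det(z - J11)(z - J_nn), so J Hurwitz makes J11 Hurwitz
   and J_nn < 0, whence d > 0; the cubic then satisfies the Routh-Hurwitz condition. *)

Section BasisVectors.
Variable R : realType.
Local Notation wid := (widen_ord (leqnSn _)).

Lemma widen_neq_max m (i : 'I_m) : (wid i == ord_max) = false.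
Proof. by apply/negbTE; rewrite -val_eqE /= neq_ltn ltn_ord. Qed.

Lemma max_neq_widen m (i : 'I_m) : (ord_max == wid i) = false.
Proof. by rewrite eq_sym widen_neq_max. Qed.

Lemma mulmx_ecol p m (A : 'M[R]_(p, m.+1)) i : (A *m ecol R m.+1) i 0 = A i ord_max.
Proof.
rewrite mxE (bigD1 ord_max) //= mxE eqxx mulr1 big1 ?addr0 // => j hj.
by rewrite mxE eqSS; move: hj; rewrite -val_eqE /= => /negbTE ->; rewrite mulr0.
Qed.

Lemma mul_ecolT_mx q m (B : 'M[R]_(m.+1, q)) j : ((ecol R m.+1)^T *m B) 0 j = B ord_max j.
Proof.
rewrite mxE (bigD1 ord_max) //= !mxE eqxx mul1r big1 ?addr0 // => l hl.
by rewrite !mxE eqSS; move: hl; rewrite -val_eqE /= => /negbTE ->; rewrite mul0r.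
Qed.

Lemma mulmx_Smx p m (A : 'M[R]_(p, m.+1)) i j : (A *m Smx R m.+1) i j = A i (wid j).
Proof.
rewrite mxE (bigD1 (wid j)) //= !mxE eqxx mulr1 big1 ?addr0 // => l hl.
by rewrite !mxE; move: hl; rewrite -val_eqE /= => /negbTE ->; rewrite mulr0.
Qed.

Lemma mul_SmxT_mx q m (B : 'M[R]_(m.+1, q)) i j : ((Smx R m.+1)^T *m B) i j = B (wid i) j.
Proof.
rewrite mxE (bigD1 (wid i)) //= !mxE eqxx mul1r big1 ?addr0 // => l hl.
by rewrite !mxE; move: hl; rewrite -val_eqE /= => /negbTE ->; rewrite mul0r.
Qed.

Lemma xlastE m (x : 'rV[R]_m.+1) : xlast x = x 0 ord_max.
Proof. exact: mulmx_ecol. Qed.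

Lemma J12_eq0P m (A : 'M[R]_m.+1) :
  (Smx R m.+1)^T *m A *m ecol R m.+1 = 0 -> forall i, A (wid i) ord_max = 0.
Proof.
by move=> /matrixP /(_ _ 0) h i; have := h i; rewrite mulmx_ecol mul_SmxT_mx mxE.
Qed.

Lemma J21_eq0P m (A : 'M[R]_m.+1) :
  (ecol R m.+1)^T *m A *m Smx R m.+1 = 0 -> forall j, A ord_max (wid j) = 0.
Proof.
by move=> /matrixP /(_ 0) h j; have := h j; rewrite mulmx_Smx mul_ecolT_mx mxE.
Qed.

Lemma trmx_blocks_eq0 m (A : 'M[R]_m.+1) :
  (Smx R m.+1)^T *m A^T *m ecol R m.+1 = 0 \/ (ecol R m.+1)^T *m A^T *m Smx R m.+1 = 0 ->
  (forall i, A (wid i) ord_max = 0) \/ (forall j, A ord_max (wid j) = 0).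
Proof.
by case=> /(congr1 trmx); rewrite !trmx_mul !trmxK trmx0 mulmxA => h;
  [right; apply: J21_eq0P | left; apply: J12_eq0P].
Qed.

End BasisVectors.

Lemma Re_lt0E (R : rcfType) (z : R[i]) : (Num.Theory.Re z < 0) = (complex.Re z < 0).
Proof.
have -> : Num.Theory.Re z = (complex.Re z)%:C%C by rewrite ReJ_add /Num.Theory.Re unlock.
by rewrite ltcE /= eqxx.
Qed.

Lemma eigenvalue_det (F : fieldType) n (A : 'M[F]_n) a :
  eigenvalue A a = (\det (A - a%:M) == 0).
Proof.
by rewrite /eigenvalue /eigenspace kermx_eq0 row_free_unit unitmxE unitfE negbK.
Qed.

Lemma hurwitzP (R : realType) n (A : 'M[R]_n) :
  hurwitz A <-> forall z : R[i],
    \det (map_mx (real_complex R) A - z%:M) = 0 -> complex.Re z < 0.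
Proof.
split=> H z; last by rewrite eigenvalue_det Re_lt0E => /eqP; apply: H.
by move=> /eqP hz; rewrite -Re_lt0E; apply: H; rewrite eigenvalue_det.
Qed.

Lemma hurwitz_trmx (R : realType) n (A : 'M[R]_n) : hurwitz A^T <-> hurwitz A.
Proof.
have E (z : R[i]) : \det (map_mx (real_complex R) A^T - z%:M) =
    \det (map_mx (real_complex R) A - z%:M).
  rewrite -map_trmx -[RHS]det_tr; congr (\det _).
  by apply/matrixP => i j; rewrite !mxE eq_sym.
by rewrite !hurwitzP; split=> H z; [rewrite -E | rewrite E]; apply: H.
Qed.

Lemma det_mx33 (F : comNzRingType) (A : 'M[F]_3) : \det A =
  A 0 0 * (A 1 1 * A 2 2 - A 1 2 * A 2 1)
  - A 0 1 * (A 1 0 * A 2 2 - A 1 2 * A 2 0)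
  + A 0 2 * (A 1 0 * A 2 1 - A 1 1 * A 2 0).
Proof.
rewrite (expand_det_row _ 0) !big_ord_recl big_ord0 addr0 /cofactor.
rewrite !(expand_det_row _ 0) !big_ord_recl !big_ord0 !addr0 /cofactor.
rewrite !det_mx11 !mxE /=.
pose B (p q : nat) := A (inord p) (inord q).
have E (i j : 'I_3) : A i j = B i j by rewrite /B !inord_val.
rewrite !E /= !expr0 !expr1; ring.
Qed.

Lemma det_castmx_block_triangular (F : comNzRingType) p n1 n2
    (e : p = (n1 + n2)%N) (A : 'M[F]_p) :
  ursubmx (castmx (e, e) A) = 0 \/ dlsubmx (castmx (e, e) A) = 0 ->
  \det A = \det (ulsubmx (castmx (e, e) A)) * \det (drsubmx (castmx (e, e) A)).
Proof.
have -> : \det A = \det (castmx (e, e) A) by case: _ / e; rewrite castmx_id.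
move=> h; rewrite -{1}[castmx _ A]submxK.
by case: h => ->; [rewrite det_lblock | rewrite det_ublock].
Qed.

(* Routh-Hurwitz for the cubic z^3 + (b + d) z^2 + (b d + g) z + g a:
   here (b + d)(b d + g) > g a because b > a. *)
Lemma cubic_root_Re_lt0 (R : rcfType) (a b d g : R) (z : R[i]) :
  0 < a -> a < b -> 0 < d -> 0 < g ->
  (z + d%:C%C) * (z * z + b%:C%C * z) + g%:C%C * (z + a%:C%C) = 0 ->
  complex.Re z < 0.
Proof.
move=> ha hab hd hg; case: z => x y /=.
rewrite /real_complex_def; simpc; case=> Ere Eim.
rewrite ltNge; apply/negP => hx.
have [y0|yn0] := eqVneq y 0.
  subst y.
  have h1 : 0 <= (x + d) * (x * x + b * x) by apply: mulr_ge0; nra.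
  have h2 : 0 < g * (x + a) by apply: mulr_gt0; lra.
  nra.
have Ey : y * y = 3 * x * x + 2 * (b + d) * x + (d * b + g).
  by apply: (mulfI yn0); nra.
have {}Ere : (x + d) * (x * x - y * y + b * x) - y * y * (2 * x + b)
   + g * (x + a) = 0 by rewrite -Ere; ring.
rewrite Ey in Ere.
have h3 : 0 <= x * x * x by rewrite -mulrA; apply: mulr_ge0 => //; nra.
have h4 : 0 <= x * (b + d) * (b + d) by apply: mulr_ge0; nra.
have h5 : 0 <= x * (d * b + g) by apply: mulr_ge0 => //; nra.
have h6 : 0 <= x * x * (b + d) by apply: mulr_ge0 => //; nra.
have h7 : g * a < (b + d) * (d * b + g).
  have : g * a < g * b by rewrite ltr_pM2l.
  have : 0 < (b + d) * (d * b) by apply: mulr_gt0; nra.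
  have : 0 < g * d by apply: mulr_gt0.
  nra.
nra.
Qed.

Lemma char_mxE (R : realType) n (B : 'M[R]_n) (z : R[i]) i j :
  (map_mx (real_complex R) B - z%:M) i j = real_complex R (B i j) - z *+ (i == j).
Proof. by rewrite !mxE. Qed.

Lemma ord2_cases (l : 'I_2) : l = 0 \/ l = 1.
Proof. by case: l => [[|[|//]]] hl; [left|right]; apply: val_inj. Qed.

Lemma ord3_cases (j : 'I_3) : [\/ j = 0, j = 1 | j = 2].
Proof.
by case: j => [[|[|[|//]]]] hj; [apply: Or31 | apply: Or32 | apply: Or33]; apply: val_inj.
Qed.

Section LoopJacobian.
Variables (R : realType) (m : nat).
Local Notation wid := (widen_ord (leqnSn m)).
Local Notation cR := (real_complex R).

Definition J11 (A : 'M[R]_m.+1) : 'M[R]_m := (Smx R m.+1)^T *m A *m Smx R m.+1.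

Lemma J11E A i j : J11 A i j = A (wid i) (wid j).
Proof. by rewrite mulmx_Smx mul_SmxT_mx. Qed.

(* The row-vector Jacobian of the closed loop at its equilibrium, in the coordinates
   (x, z1, z2): p = kp z2, k = kp x_n, a = eta kp z2, c = eta kp z1. *)
Definition Jloop_ur (th : R) : 'M[R]_(m.+1, 2) :=
  \matrix_(i, l) (((i == ord_max) && (l == 1))%:R * th).
Definition Jloop_dl (k : R) : 'M[R]_(2, m.+1) :=
  \matrix_(l, i) (((l == 1) && (i == ord_max))%:R * - k).
Definition Jloop_dr (a c : R) : 'M[R]_2 :=
  \matrix_(l, l') (if l == 0 then - a else - c).
Definition Jloop (A : 'M[R]_m.+1) (p th k a c : R) : 'M[R]_(m.+1 + 2) :=
  block_mx (A - p *: delta_mx ord_max ord_max) (Jloop_ur th) (Jloop_dl k) (Jloop_dr a c).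

(* Split the indices as m + 1, resp. m + 3, to isolate the last coordinate of x,
   resp. (x_n, z1, z2). *)
Let e1 : m.+1 = (m + 1)%N. Proof. by rewrite addn1. Qed.
Let e3 : (m.+1 + 2 = m + 3)%N. Proof. exact: addSnnS. Qed.

Lemma cast1_lshift i : cast_ord (esym e1) (lshift 1 i) = wid i.
Proof. exact: val_inj. Qed.
Lemma cast1_rshift : cast_ord (esym e1) (rshift m (0 : 'I_1)) = ord_max.
Proof. by apply: val_inj => /=; rewrite addn0. Qed.
Lemma cast3_lshift i : cast_ord (esym e3) (lshift 3 i) = lshift 2 (wid i).
Proof. exact: val_inj. Qed.
Lemma cast3_rshift0 : cast_ord (esym e3) (rshift m (0 : 'I_3)) = lshift 2 ord_max.
Proof. by apply: val_inj => /=; rewrite addn0. Qed.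
Lemma cast3_rshift1 : cast_ord (esym e3) (rshift m (1 : 'I_3)) = rshift m.+1 (0 : 'I_2).
Proof. by apply: val_inj => /=; lia. Qed.
Lemma cast3_rshift2 : cast_ord (esym e3) (rshift m (2 : 'I_3)) = rshift m.+1 (1 : 'I_2).
Proof. by apply: val_inj => /=; lia. Qed.

Variables (A : 'M[R]_m.+1) (p th k a c : R).
Hypothesis hblk : (forall i, A (wid i) ord_max = 0) \/ (forall j, A ord_max (wid j) = 0).

Lemma det_char_split_last (w : R[i]) :
  \det (map_mx cR A - w%:M) = \det (map_mx cR (J11 A) - w%:M) * (cR (A ord_max ord_max) - w).
Proof.
rewrite (det_castmx_block_triangular (e := e1)); last first.
  case: hblk => hb; [left|right]; apply/matrixP => i j.
    rewrite !mxE (castmxE (e1, e1)) /= ord1.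
    by rewrite cast1_lshift cast1_rshift char_mxE hb widen_neq_max mulr0n rmorph0 subr0.
  rewrite !mxE (castmxE (e1, e1)) /= ord1.
  by rewrite cast1_lshift cast1_rshift char_mxE hb max_neq_widen mulr0n rmorph0 subr0.
congr (_ * _).
  congr (\det _); apply/matrixP => i j.
  by rewrite [LHS]mxE [LHS]mxE (castmxE (e1, e1)) /= !cast1_lshift !char_mxE J11E.
by rewrite det_mx11 [LHS]mxE [LHS]mxE (castmxE (e1, e1)) /= cast1_rshift char_mxE eqxx.
Qed.

Local Notation M z := (map_mx cR (Jloop A p th k a c) - z%:M).

Lemma charJloop_ll z i j : M z (lshift 2 i) (lshift 2 j) =
  cR (A i j - p * ((i == ord_max) && (j == ord_max))%:R) - z *+ (i == j).
Proof. by rewrite char_mxE block_mxEul !mxE eq_lshift. Qed.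
Lemma charJloop_lr z i l : M z (lshift 2 i) (rshift m.+1 l) =
  cR (((i == ord_max) && (l == 1))%:R * th).
Proof. by rewrite char_mxE block_mxEur !mxE eq_lrshift mulr0n subr0. Qed.
Lemma charJloop_rl z l i : M z (rshift m.+1 l) (lshift 2 i) =
  cR (((l == 1) && (i == ord_max))%:R * - k).
Proof. by rewrite char_mxE block_mxEdl !mxE eq_rlshift mulr0n subr0. Qed.
Lemma charJloop_rr z l l' : M z (rshift m.+1 l) (rshift m.+1 l') =
  cR (if l == 0 then - a else - c) - z *+ (l == l').
Proof. by rewrite char_mxE block_mxEdr !mxE eq_rshift. Qed.

Let charJloopE := (charJloop_ll, charJloop_lr, charJloop_rl, charJloop_rr).
Let castE := (cast3_lshift, cast3_rshift0, cast3_rshift1, cast3_rshift2).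

Lemma charJloop_triangular z :
  ursubmx (castmx (e3, e3) (M z)) = 0 \/ dlsubmx (castmx (e3, e3) (M z)) = 0.
Proof.
case: hblk => hb; [left|right]; apply/matrixP => i j; rewrite !mxE (castmxE (e3, e3)) /=.
  case: (ord3_cases j) => ->; rewrite !castE !charJloopE widen_neq_max /= ?hb;
    by rewrite ?(mul0r, mulr0, subr0, mulr0n, rmorph0).
case: (ord3_cases i) => ->;
  rewrite !castE !charJloopE ?max_neq_widen ?widen_neq_max ?andbF /= ?hb;
  by rewrite ?(mul0r, mulr0, subr0, mulr0n, rmorph0).
Qed.

Lemma charJloop_ul z : ulsubmx (castmx (e3, e3) (M z)) = map_mx cR (J11 A) - z%:M.
Proof.
apply/matrixP => i j; rewrite [LHS]mxE [LHS]mxE (castmxE (e3, e3)) /= !cast3_lshift.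
by rewrite charJloop_ll widen_neq_max char_mxE J11E mulr0 subr0.
Qed.

Lemma charJloop_dr z : \det (drsubmx (castmx (e3, e3) (M z))) =
  - ((z + cR (p - A ord_max ord_max)) * (z * z + cR (a + c) * z) + cR (th * k) * (z + cR a)).
Proof.
rewrite det_mx33 !mxE !(castmxE (e3, e3)) /= !castE !charJloopE !eqxx /=.
rewrite !mulr0n !mulr1n !mul0r !mul1r ?mulr1 ?rmorph0 !rmorphN !rmorphB !rmorphD !rmorphM.
ring.
Qed.

Lemma det_charJloop z : \det (M z) =
  \det (map_mx cR (J11 A) - z%:M) *
  - ((z + cR (p - A ord_max ord_max)) * (z * z + cR (a + c) * z) + cR (th * k) * (z + cR a)).
Proof.
rewrite (det_castmx_block_triangular (e := e3)) ?charJloop_ul ?charJloop_dr //.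
exact: charJloop_triangular.
Qed.

Lemma hurwitz_Jloop : hurwitz A -> 0 < p -> 0 < th -> 0 < k -> 0 < a -> 0 < c ->
  hurwitz (Jloop A p th k a c).
Proof.
move=> /hurwitzP hA hp hth hk ha hc; apply/hurwitzP => z.
have hJ11 w : \det (map_mx cR (J11 A) - w%:M) = 0 -> complex.Re w < 0.
  by move=> h0; apply: hA; rewrite det_char_split_last h0 mul0r.
have hAlast : A ord_max ord_max < 0.
  have := hA (cR (A ord_max ord_max)).
  by rewrite det_char_split_last subrr mulr0 => /(_ erefl).
move=> /eqP; rewrite det_charJloop mulf_eq0 oppr_eq0 => /orP [/eqP /hJ11 //|/eqP].
apply: cubic_root_Re_lt0 => //; first by rewrite ltrDl.
  by rewrite subr_gt0 (lt_trans hAlast).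
exact: mulr_gt0.
Qed.

End LoopJacobian.

Section JloopAction.
Variables (R : realType) (m : nat) (A : 'M[R]_m.+1) (p th k a c : R).
Variable u : 'rV[R]_(m.+1 + 2).
Local Notation xn := (u 0 (lshift 2 ord_max)).
Local Notation z1 := (u 0 (rshift m.+1 0)).
Local Notation z2 := (u 0 (rshift m.+1 1)).

Lemma mulmx_Jloop_l j : (u *m Jloop A p th k a c) 0 (lshift 2 j) =
  (lsubmx u *m A) 0 j - p * xn * (j == ord_max)%:R - k * z2 * (j == ord_max)%:R.
Proof.
rewrite -{1}[u]hsubmxK mul_row_block row_mxEl mulmxBr -scalemxAr.
rewrite [X in _ = X - _ - _]mxE !mxE.
have -> : \sum_i lsubmx u 0 i * delta_mx ord_max ord_max i j = xn * (j == ord_max)%:R.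
  rewrite (bigD1 ord_max) //= big1 ?addr0 => [|i /negbTE hi]; rewrite !mxE ?hi //=.
    by rewrite eqxx.
  by rewrite mulr0.
have -> : \sum_l rsubmx u 0 l * Jloop_dl m k l j = - k * z2 * (j == ord_max)%:R.
  rewrite big_ord_recl big_ord1 !mxE /=.
  have -> : lift ord0 ord0 = 1 :> 'I_2 by apply: val_inj.
  ring.
ring.
Qed.

Lemma mulmx_Jloop_r0 : (u *m Jloop A p th k a c) 0 (rshift m.+1 0) = - a * z1 - c * z2.
Proof.
rewrite -{1}[u]hsubmxK mul_row_block row_mxEr !mxE.
have -> : \sum_i lsubmx u 0 i * Jloop_ur m th i 0 = 0.
  by rewrite big1 // => i _; rewrite !mxE andbF mul0r mulr0.
rewrite big_ord_recl big_ord1 !mxE /=.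
have -> : lift ord0 ord0 = 1 :> 'I_2 by apply: val_inj.
ring.
Qed.

Lemma mulmx_Jloop_r1 :
  (u *m Jloop A p th k a c) 0 (rshift m.+1 1) = th * xn - a * z1 - c * z2.
Proof.
rewrite -{1}[u]hsubmxK mul_row_block row_mxEr !mxE.
have -> : \sum_i lsubmx u 0 i * Jloop_ur m th i 1 = th * xn.
  rewrite (bigD1 ord_max) //= big1 ?addr0 => [|i /negbTE hi]; rewrite !mxE ?hi //=.
    by rewrite eqxx mul1r mulrC.
  by rewrite mul0r mulr0.
rewrite big_ord_recl big_ord1 !mxE /=.
have -> : lift ord0 ord0 = 1 :> 'I_2 by apply: val_inj.
ring.
Qed.

End JloopAction.

Section IsDiffPointwise.
Context {R : numFieldType} {V W : normedModType R}.

(* [simpl] does not unfold the zero of a function space, which [is_diff] instances produce. *)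
Lemma zero_funE (t : V) : (0 : V -> W) t = 0.
Proof. by []. Qed.

Lemma is_diff_eq x (f g df dg : V -> W) :
  f =1 g -> df =1 dg -> is_diff x g dg -> is_diff x f df.
Proof. by move=> /funext -> /funext ->. Qed.

Lemma is_diff_addf x (f g df dg : V -> W) : is_diff x f df -> is_diff x g dg ->
  is_diff x (fun t => f t + g t) (fun t => df t + dg t).
Proof. by move=> ? ?; apply: is_diffD. Qed.

Lemma is_diff_subf x (f g df dg : V -> W) : is_diff x f df -> is_diff x g dg ->
  is_diff x (fun t => f t - g t) (fun t => df t - dg t).
Proof. by move=> ? ?; apply: is_diffB. Qed.

Lemma is_diff_mulf x (f g df dg : V -> R^o) : is_diff x f df -> is_diff x g dg ->
  is_diff x (fun t => f t * g t) (fun t => f x * dg t + g x * df t).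
Proof. by move=> ? ?; apply: is_diffM. Qed.

End IsDiffPointwise.

Section IsDiffMatrix.
Variable R : realType.

Lemma is_diff_coord p q (x : 'M[R]_(p, q)) i j :
  is_diff x (fun t : 'M[R]_(p, q) => t i j) (fun t => t i j).
Proof.
apply: DiffDef; first exact: differentiable_coord.
apply/funext => v; rewrite -deriveE; last exact: differentiable_coord.
have := derive_mx (@derivable_id _ _ x v); rewrite derive_id => /matrixP /(_ i j).
by rewrite mxE.
Qed.

Lemma differentiable_mx_entries p q r s (F : 'M[R]_(p, q) -> 'M[R]_(r, s)) x :
  (forall i j, differentiable (fun t => F t i j) x) -> differentiable F x.
Proof.
move=> h.
have -> : F = \sum_(i < r) \sum_(j < s) (fun t => F t i j *: delta_mx i j).
  apply/funext => t; rewrite fct_sumE; under eq_bigr do rewrite fct_sumE.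
  exact: matrix_sum_delta.
apply: differentiable_sum => i; apply: differentiable_sum => j.
exact: differentiableZl.
Qed.

Lemma is_diff_lsubmx_comp m n (f : 'rV[R]_m -> 'rV[R]_m) (w : 'rV[R]_(m + n)) k :
  differentiable f (lsubmx w) ->
  is_diff w (fun t : 'rV[R]_(m + n) => f (lsubmx t) 0 k)
            (fun u => (lsubmx u *m 'J f (lsubmx w)) 0 k).
Proof.
move=> df.
have dfl : differentiable (f \o lsubmx) w.
  by apply: differentiable_comp => //; exact: differentiable_lsubmx.
have dfk : differentiable (fun t : 'rV[R]_(m + n) => f (lsubmx t) 0 k) w.
  have := @differentiable_comp _ _ _ _ (f \o lsubmx) (fun M : 'rV[R]_m => M 0 k) w dfl.
  by apply; exact: differentiable_coord.
apply: DiffDef => //; apply/funext => u.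
rewrite -deriveE //.
have := derive_mx (@diff_derivable _ _ _ _ _ u dfl) => /matrixP /(_ 0 k); rewrite mxE => <-.
rewrite deriveE // diff_comp //; last exact: differentiable_lsubmx.
rewrite /= diff_lin; last exact: continuous_lsubmx.
by rewrite -deriveE // deriveEjacobian.
Qed.

End IsDiffMatrix.

Ltac solve_is_diff := repeat first [ exact: is_diff_coord
  | apply: is_diff_mulf | apply: is_diff_subf | apply: is_diff_addf ].

Section ClosedLoopJacobian.
Variables (R : realType) (m : nat) (f : 'rV[R]_m.+1 -> 'rV[R]_m.+1).
Variables (b0 : 'rV[R]_m.+1) (mu theta eta kp : R) (xs : 'rV[R]_m.+1) (z1 z2 : R).
Hypothesis df : differentiable f xs.
Local Notation F := (closed_loop f b0 mu theta eta kp).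
Local Notation w := (row_mx xs (\row_(i < 2) nth 0 [:: z1; z2] i)).
Local Notation Jcl := (Jloop ('J f xs) (kp * z2) theta (kp * xs 0 ord_max)
  (eta * kp * z2) (eta * kp * z1)).

Lemma closed_loopE_l t j : F t 0 (lshift 2 j) = f (lsubmx t) 0 j -
  kp * t 0 (lshift 2 ord_max) * t 0 (rshift m.+1 1) * (j == ord_max)%:R + b0 0 j.
Proof. by rewrite /closed_loop row_mxEl !mxE xlastE !mxE eqSS -val_eqE. Qed.

Lemma closed_loopE_r0 t : F t 0 (rshift m.+1 0) =
  mu - eta * kp * t 0 (rshift m.+1 0) * t 0 (rshift m.+1 1).
Proof. by rewrite /closed_loop row_mxEr !mxE. Qed.

Lemma closed_loopE_r1 t : F t 0 (rshift m.+1 1) =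
  theta * t 0 (lshift 2 ord_max) - eta * kp * t 0 (rshift m.+1 0) * t 0 (rshift m.+1 1).
Proof. by rewrite /closed_loop row_mxEr !mxE xlastE !mxE. Qed.

Lemma w_x i : w 0 (lshift 2 i) = xs 0 i. Proof. by rewrite row_mxEl. Qed.
Lemma w_z1 : w 0 (rshift m.+1 0) = z1. Proof. by rewrite row_mxEr mxE. Qed.
Lemma w_z2 : w 0 (rshift m.+1 1) = z2. Proof. by rewrite row_mxEr mxE. Qed.

Lemma is_diff_closed_loop_entry j :
  is_diff w (fun t => F t 0 j) (fun u => (u *m Jcl) 0 j).
Proof.
rewrite -(splitK j); case: (fintype.split j) => [i|l] /=.
  eapply (is_diff_eq (fun t => closed_loopE_l t i)); last first.
    apply: is_diff_addf; first apply: is_diff_subf; last by solve_is_diff.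
    by apply: is_diff_lsubmx_comp; rewrite row_mxKl.
  by move=> u /=; rewrite mulmx_Jloop_l row_mxKl w_x w_z2 !zero_funE; ring.
case: (ord2_cases l) => ->.
  eapply (is_diff_eq closed_loopE_r0); last by solve_is_diff.
  by move=> u /=; rewrite mulmx_Jloop_r0 w_z1 w_z2 ?zero_funE; ring.
eapply (is_diff_eq closed_loopE_r1); last by solve_is_diff.
by move=> u /=; rewrite mulmx_Jloop_r1 w_z1 w_z2 ?zero_funE; ring.
Qed.

Lemma jacobian_closed_loop : 'J F w = Jcl.
Proof.
have dF : differentiable F w.
  by apply: differentiable_mx_entries => i j; rewrite (ord1 i);
    case: (is_diff_closed_loop_entry j).
have DF u : 'D_u F w = u *m Jcl.
  apply/matrixP => i j; rewrite (ord1 i) derive_mx; last exact: diff_derivable.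
  by have [dj dv] := is_diff_closed_loop_entry j; rewrite mxE deriveE // dv.
by apply/row_matrixP => i; rewrite !rowE -deriveEjacobian ?DF.
Qed.

End ClosedLoopJacobian.

Theorem mainTheorem16 (R : realType) (n : nat) (hn : (2 <= n)%N)
  (f : 'rV[R]_n -> 'rV[R]_n) (hf : C1 f)
  (b0 : 'rV[R]_n) (hb0 : forall i, 0 <= b0 0 i)
  (mu theta : R) (hmu : 0 < mu) (htheta : 0 < theta)
  (xstar : 'rV[R]_n) (ustar : R)
  (hxstar : forall i, 0 <= xstar 0 i) (hustar : 0 < ustar)
  (hxn : xlast xstar = mu / theta)
  (heq : f xstar - (ustar * (mu / theta)) *: (ecol R n)^T + b0 = 0)
  (hJ : hurwitz (jac f xstar))
  (hblk : (Smx R n)^T *m jac f xstar *m ecol R n = 0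
          \/ (ecol R n)^T *m jac f xstar *m Smx R n = 0) :
  forall eta kp : R, 0 < eta -> 0 < kp ->
    hurwitz (jac (closed_loop f b0 mu theta eta kp)
               (row_mx xstar (\row_(i < 2) nth 0 [:: mu / (eta * ustar);
                                                     ustar / kp] i))).
Proof.
move=> eta kp heta hkp.
case: n hn f hf b0 xstar hxn hJ hblk {hb0 hxstar heq} => [//|m] _ f [df _] b0 xs hxn hJ hblk.
rewrite /jac jacobian_closed_loop // hurwitz_trmx.
have hxs : 0 < xs 0 ord_max by rewrite -xlastE hxn divr_gt0.
have hz1 : 0 < mu / (eta * ustar) by rewrite divr_gt0 // mulr_gt0.
have hz2 : 0 < ustar / kp by rewrite divr_gt0.
apply: (hurwitz_Jloop (trmx_blocks_eq0 hblk)).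
- by move: hJ; rewrite /jac hurwitz_trmx.
- exact: mulr_gt0.
- exact: htheta.
- exact: mulr_gt0.
- by apply: mulr_gt0 => //; apply: mulr_gt0.
- by apply: mulr_gt0 => //; apply: mulr_gt0.
Qed.
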